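(* Let $m$ be an even positive integer. Then $$\bigcup_{\gamma\in M_1^m}\Gamma_0(2)^+\gamma=\bigcup_{\gamma\in M_2^m}\Gamma_0(2)^+\gamma w_2.$$
   Context: Matrices are in $GL_2^+(\mathbb{R})$ considered up to sign; $\Gamma_0(2)=\{\begin{bmatrix}a&b\\c&d\end{bmatrix}\in SL_2(\mathbb{Z}): c\equiv0\pmod 2\}$, $w_2=2^{-1/2}\begin{bmatrix}0&-1\\2&0\end{bmatrix}$, $\Gamma_0(2)^+$ is the group generated by $\Gamma_0(2)$ and $w_2$. With integers $x,z>0$, $y$: $M_1^m=\{\begin{bmatrix}x&y\\0&z\end{bmatrix}: xz=m,\ 0\leq y<z,\ \gcd(x,y,z)=1,\ x\text{ odd}\}$, $S_1^m=\{\begin{bmatrix}x&y\\0&z\end{bmatrix}: xz=m,\ 0\leq y<z,\ \gcd(x,y,z)=1,\ z\text{ odd}\}$, $S_2^m=\{2^{-1/2}\begin{bmatrix}x&y\\0&z\end{bmatrix}: xz=2m,\ 0\leq y<z,\ \gcd(x,y,z)=1,\ x,z\text{ even}\}$, $M_2^m=S_1^m\cup S_2^m$. *)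

From HB Require Import structures.
From mathcomp Require Import all_boot all_order all_algebra.
From mathcomp Require Import reals.
Set Implicit Arguments. Unset Strict Implicit. Unset Printing Implicit Defensive.
Import Order.TTheory GRing.Theory Num.Theory.
Local Open Scope ring_scope.

Definition mx2 {R : realType} (a b c d : R) : 'M[R]_2 :=
  \matrix_(i < 2, j < 2)
    if i == ord0 then (if j == ord0 then a else b) else (if j == ord0 then c else d).

Definition intmx {R : realType} (M : 'M[int]_2) : 'M[R]_2 :=
  \matrix_(i, j) (M i j)%:~R.

Definition inGamma0_2 (M : 'M[int]_2) : Prop :=
  \det M = 1 /\ (2 %| M (lift ord0 ord0) ord0)%Z.

Definition w2 {R : realType} : 'M[R]_2 :=
  (Num.sqrt (2 : R))^-1 *: mx2 0 (-1) 2 0.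

Inductive Gamma0_2plus {R : realType} : 'M[R]_2 -> Prop :=
  | G2p_gamma (M : 'M[int]_2) : inGamma0_2 M -> Gamma0_2plus (intmx M)
  | G2p_w2 : Gamma0_2plus w2
  | G2p_mul g h : Gamma0_2plus g -> Gamma0_2plus h -> Gamma0_2plus (g *m h)
  | G2p_inv g : Gamma0_2plus g -> Gamma0_2plus (invmx g).

Definition ut {R : realType} (x y z : nat) : 'M[R]_2 := mx2 x%:R y%:R 0 z%:R.

Definition gcd3 (x y z : nat) : nat := gcdn (gcdn x y) z.

Definition condM1 (m x y z : nat) : Prop :=
  (0 < x)%N /\ (0 < z)%N /\ (x * z = m)%N /\ (y < z)%N /\ gcd3 x y z = 1%N /\ odd x.
Definition condS1 (m x y z : nat) : Prop :=
  (0 < x)%N /\ (0 < z)%N /\ (x * z = m)%N /\ (y < z)%N /\ gcd3 x y z = 1%N /\ odd z.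
Definition condS2 (m x y z : nat) : Prop :=
  (0 < x)%N /\ (0 < z)%N /\ (x * z = 2 * m)%N /\ (y < z)%N /\ gcd3 x y z = 1%N /\ ~~ odd x /\ ~~ odd z.

Definition inM1 {R : realType} (m : nat) (g : 'M[R]_2) : Prop :=
  exists x y z, condM1 m x y z /\ g = ut x y z.
Definition inS1 {R : realType} (m : nat) (g : 'M[R]_2) : Prop :=
  exists x y z, condS1 m x y z /\ g = ut x y z.
Definition inS2 {R : realType} (m : nat) (g : 'M[R]_2) : Prop :=
  exists x y z, condS2 m x y z /\ g = (Num.sqrt (2 : R))^-1 *: ut x y z.
Definition inM2 {R : realType} (m : nat) (g : 'M[R]_2) : Prop :=
  inS1 m g \/ inS2 m g.

(* Hermite reduction inside Gamma_0(2): an integral matrix of positive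
   determinant whose first column is x (u, v), with (u, v) primitive and v even,
   equals gamma [x y; 0 z] with gamma in Gamma_0(2) and 0 <= y < z, because
   (u, v) completes to an element of Gamma_0(2).  Now w_2 [x y; 0 z] w_2 is
   the integral matrix [-z 0; 2y -x] and sqrt 2 [x y; 0 z] w_2 is
   [2y -x; 2z 0].  Reducing these rewrites each element of M_1 as an element of
   Gamma_0(2)^+ S_i w_2, where i = 1 or 2 according to the parity of
   2y / gcd(z, 2y), and each element of S_1 w_2 or S_2 w_2 as an element of
   Gamma_0(2)^+ M_1.  As gamma is unimodular, the reduced matrix has the same
   common divisors of entries as the original one, which gives the gcd
   conditions. *)

From Pilot Require Import Defs.
From mathcomp Require Import all_boot all_order all_algebra.
From mathcomp Require Import reals.
From mathcomp Require Import zify ring.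
Set Implicit Arguments. Unset Strict Implicit. Unset Printing Implicit Defensive.
Import Order.TTheory GRing.Theory Num.Theory.
Local Open Scope ring_scope.

(* The [mx2] of Defs over an arbitrary type; on real matrices the two are
   convertible. *)
Definition mat2 {T : Type} (a b c d : T) : 'M[T]_2 :=
  \matrix_(i < 2, j < 2)
    if i == ord0 then (if j == ord0 then a else b) else (if j == ord0 then c else d).

Lemma mul_mat2 (T : pzRingType) (a b c d a' b' c' d' : T) :
  mat2 a b c d *m mat2 a' b' c' d' =
  mat2 (a * a' + b * c') (a * b' + b * d') (c * a' + d * c') (c * b' + d * d').
Proof.
apply/matrixP => i j; rewrite !mxE !big_ord_recl big_ord0 !mxE.
by case: i => [[|[|i]] Hi]; case: j => [[|[|j]] Hj] //=; rewrite ?addr0.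
Qed.

Lemma scale_mat2 (T : pzRingType) (k a b c d : T) :
  k *: mat2 a b c d = mat2 (k * a) (k * b) (k * c) (k * d).
Proof.
by apply/matrixP => i j; rewrite !mxE; case: i => [[|[|i]] Hi]; case: j => [[|[|j]] Hj].
Qed.

Lemma det_mat2 (T : comPzRingType) (a b c d : T) :
  \det (mat2 a b c d) = a * d - b * c.
Proof.
rewrite (expand_det_row _ ord0) !big_ord_recl big_ord0 /cofactor !det_mx11 !mxE /bump /=.
ring.
Qed.

Lemma intmx_mat2 (R : realType) (a b c d : int) :
  intmx (mat2 a b c d) = mat2 (a%:~R : R) b%:~R c%:~R d%:~R.
Proof.
by apply/matrixP => i j; rewrite !mxE; case: i => [[|[|i]] Hi]; case: j => [[|[|j]] Hj].
Qed.

Lemma intmxM (R : realType) (A B : 'M[int]_2) :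
  intmx (A *m B) = (intmx A : 'M[R]_2) *m intmx B.
Proof. by apply/matrixP => i j; rewrite !mxE !big_ord_recl !big_ord0 !mxE !addr0 intrD !intrM. Qed.

Lemma intmxZ (R : realType) (k : int) (A : 'M[int]_2) :
  intmx (k *: A) = (k%:~R : R) *: intmx A.
Proof. by apply/matrixP => i j; rewrite !mxE intrM. Qed.

Lemma ut_intmx (R : realType) (x y z : nat) :
  (ut x y z : 'M[R]_2) = intmx (mat2 x%:Z y%:Z 0 z%:Z).
Proof. by rewrite intmx_mat2. Qed.

Lemma inGamma0_2_mat2 (a b c d : int) :
  a * d - b * c = 1 -> (2 %| c)%Z -> inGamma0_2 (mat2 a b c d).
Proof. by move=> det1 c_even; split; [rewrite det_mat2 | rewrite mxE]. Qed.

Lemma coprime_cofactors (a c : nat) : (0 < a)%N ->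
  exists a' c', [/\ a = (gcdn a c * a')%N, c = (gcdn a c * c')%N & coprime a' c'].
Proof.
move=> a_gt0; set g := gcdn a c.
have g_gt0 : (0 < g)%N by rewrite gcdn_gt0 a_gt0.
have [Ea Ec] : a = (g * (a %/ g))%N /\ c = (g * (c %/ g))%N.
  by rewrite !(mulnC g) !divnK ?dvdn_gcdl ?dvdn_gcdr.
exists (a %/ g)%N, (c %/ g)%N; split => //.
by rewrite /coprime -(eqn_pmul2l g_gt0) muln_gcdr -Ea -Ec muln1.
Qed.

Lemma coprime_gcd_double (x y z : nat) :
  gcd3 x y z = 1%N -> odd x || odd z -> coprime x (gcdn z (2 * y)).
Proof.
move=> gxyz xz_odd; set d := gcdn x (gcdn z (2 * y)).
have dx : (d %| x)%N := dvdn_gcdl _ _.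
have dz : (d %| z)%N := dvdn_trans (dvdn_gcdr _ _) (dvdn_gcdl _ _).
have d2y : (d %| 2 * y)%N := dvdn_trans (dvdn_gcdr _ _) (dvdn_gcdr _ _).
have d_odd : odd d by case/orP: xz_odd => [/(dvdn_odd dx) | /(dvdn_odd dz)].
have dy : (d %| y)%N by rewrite -(Gauss_dvdr _ (_ : coprime d 2)) ?coprimen2.
have : (d %| gcd3 x y z)%N by rewrite !dvdn_gcd dx dy dz.
by rewrite gxyz dvdn1.
Qed.

Lemma dvdz2_nat (n : nat) : (2 %| n%:Z)%Z = ~~ odd n.
Proof. by rewrite dvdzE /= dvdn2. Qed.

Lemma gcd3_eq1P (x y z : nat) :
  gcd3 x y z = 1%N <->
  (forall e : int, (e %| x%:Z)%Z -> (e %| y%:Z)%Z -> (e %| z%:Z)%Z -> (e %| 1)%Z).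
Proof.
split=> [g1 e | h].
  by rewrite !dvdzE /= => ex ey ez; rewrite -g1 /gcd3 !dvdn_gcd ex ey ez.
apply/eqP; rewrite -dvdn1; apply: (h (gcd3 x y z)%:Z); rewrite dvdzE /= /gcd3.
- exact: dvdn_trans (dvdn_gcdl _ _) (dvdn_gcdl _ _).
- exact: dvdn_trans (dvdn_gcdl _ _) (dvdn_gcdr _ _).
- exact: dvdn_gcdr.
Qed.

Lemma coprime_dvdz1 (e : int) (a b : nat) :
  coprime a b -> (e %| a%:Z)%Z -> (e %| b%:Z)%Z -> (e %| 1)%Z.
Proof.
move=> /eqP ab1 ea eb; have : (e %| gcdz a b)%Z by rewrite dvdz_gcd ea eb.
by rewrite /gcdz /= ab1.
Qed.

Lemma Gamma0_2_hermite (x : nat) (u v b d : int) :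
  coprimez u v -> (2 %| v)%Z -> 0 < u * d - v * b ->
  exists y z : nat, exists2 gamma : 'M[int]_2, inGamma0_2 gamma &
   [/\ mat2 (x%:Z * u) b (x%:Z * v) d = gamma *m mat2 x%:Z y%:Z 0 z%:Z,
       (y < z)%N, z%:Z = u * d - v * b
     & forall e : int, (e %| x%:Z)%Z -> (e %| y%:Z)%Z -> (e %| z%:Z)%Z ->
         (e %| b)%Z && (e %| d)%Z].
Proof.
move=> /coprimezP[[p q] /= bezout] v_even.
set Z := u * d - v * b => Z_gt0.
have := divz_eq (p * b + q * d) Z.
set k := ((p * b + q * d) %/ Z)%Z; set Y := ((p * b + q * d) %% Z)%Z => EY.
have Y_ge0 : 0 <= Y by rewrite modz_ge0 // lt0r_neq0.
have Y_ltZ : Y < Z by rewrite ltz_pmod.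
have Eb : b = u * Y + (u * k - q) * Z.
  transitivity (u * (k * Z + Y) - q * Z); last by ring.
  by rewrite -EY /Z -[LHS]mulr1 -bezout; ring.
have Ed : d = v * Y + (v * k + p) * Z.
  transitivity (v * (k * Z + Y) + p * Z); last by ring.
  by rewrite -EY /Z -[LHS]mulr1 -bezout; ring.
(* gamma = [u -q; v p] [1 k; 0 1]: the first factor reduces the matrix to
   [x, p b + q d; 0, Z], the second reduces p b + q d modulo Z. *)
exists `|Y|%N, `|Z|%N, (mat2 u (u * k - q) v (v * k + p)).
  by apply: inGamma0_2_mat2 => //; rewrite -bezout; ring.
rewrite !gez0_abs ?(ltW Z_gt0) //; split => //.
- by rewrite mul_mat2; congr mat2; rewrite ?[in LHS]Eb ?[in LHS]Ed; ring.
- by lia.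
- by move=> e ex eY eZ; rewrite Eb Ed !rpredD ?dvdz_mull.
Qed.

Definition W2 : 'M[int]_2 := mat2 0 (-1) 2 0.

Section AtkinLehner.
Variable R : realType.
Local Notation s := (Num.sqrt (2 : R))^-1.

Lemma w2E : w2 = s *: intmx W2 :> 'M[R]_2.
Proof. by rewrite intmx_mat2. Qed.

Lemma halve_intmx (B : 'M[int]_2) : (2^-1 : R) *: intmx (2%:Z *: B) = intmx B.
Proof. by rewrite intmxZ scalerA mulVf ?scale1r ?pnatr_eq0. Qed.

Lemma sqrt2V_sqr : s * s = 2^-1.
Proof. by rewrite -invfM -expr2 sqr_sqrtr ?ler0n. Qed.

Lemma w2_conj (A B : 'M[int]_2) :
  W2 *m A *m W2 = 2%:Z *: B -> w2 *m intmx A *m w2 = intmx B :> 'M[R]_2.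
Proof.
move=> E; rewrite w2E -scalemxAl -scalemxAr -scalemxAl scalerA sqrt2V_sqr.
by rewrite -!intmxM E halve_intmx.
Qed.

Lemma intmx_mul_w2 (A B : 'M[int]_2) :
  A *m W2 = W2 *m B -> intmx A *m w2 = w2 *m intmx B :> 'M[R]_2.
Proof. by move=> E; rewrite w2E -scalemxAr -scalemxAl -!intmxM E. Qed.

Lemma scale_intmx_mul_w2 (A B : 'M[int]_2) :
  A *m W2 = 2%:Z *: B -> (s *: intmx A) *m w2 = intmx B.
Proof.
move=> E; rewrite w2E -scalemxAl -scalemxAr scalerA sqrt2V_sqr.
by rewrite -intmxM E halve_intmx.
Qed.

End AtkinLehner.

Lemma S1w2_coset_M1 (R : realType) m x y z : condS1 m x y z ->
  exists2 gam, inM1 m gam &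
    exists2 h, Gamma0_2plus h & (ut x y z : 'M[R]_2) *m w2 = h *m gam.
Proof.
case=> x_gt0 [z_gt0 [xz_m [_ [gxyz z_odd]]]].
have [z' [t [Ez E2y cop]]] := coprime_cofactors (2 * y) z_gt0.
set g := gcdn z (2 * y) in Ez E2y.
have g_gt0 : (0 < g)%N by rewrite gcdn_gt0 z_gt0.
have cop_xg : coprime x g by rewrite coprime_gcd_double // z_odd orbT.
have [g_odd z'_odd] : odd g /\ odd z' by apply/andP; rewrite -oddM -Ez.
have cop' : coprimez z' (- t%:Z) by rewrite coprimezN coprimezE.
have t_even : (2 %| - t%:Z)%Z by rewrite rpredN dvdz2_nat; move: E2y; lia.
have det_gt0 : 0 < z'%:Z * x%:Z - (- t%:Z) * 0.
  by rewrite mulr0 subr0 -PoszM ltz_nat muln_gt0 x_gt0 andbT odd_gt0.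
have [y1 [z1 [gam gamG [Egam y1_lt_z1 Ez1 dvd_bd]]]] :=
  Gamma0_2_hermite g cop' t_even det_gt0.
rewrite mulrN -!PoszM -Ez -E2y in Egam.
have gcd1 : gcd3 g y1 z1 = 1%N.
  apply/gcd3_eq1P => e eg ey1 ez1; have /andP[_ ex] := dvd_bd e eg ey1 ez1.
  exact: coprime_dvdz1 cop_xg ex eg.
exists (ut g y1 z1).
  exists g, y1, z1; split=> //; repeat split => //.
  - exact: leq_ltn_trans y1_lt_z1.
  - by apply/eqP; rewrite -eqz_nat PoszM Ez1 -xz_m Ez !PoszM; apply/eqP; ring.
exists (w2 *m intmx gam); first by apply: G2p_mul; [exact: G2p_w2 | exact: G2p_gamma].
rewrite -mulmxA !ut_intmx -intmxM -Egam; apply: intmx_mul_w2.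
by rewrite /W2 !mul_mat2; congr mat2; ring.
Qed.

Lemma S2w2_coset_M1 (R : realType) m x y z : condS2 m x y z ->
  exists2 gam, inM1 m gam & exists2 h, Gamma0_2plus h &
    ((Num.sqrt (2 : R))^-1 *: ut x y z) *m w2 = h *m gam.
Proof.
case=> x_gt0 [z_gt0 [xz_m [_ [gxyz [x_even z_even]]]]].
have [x2 Ex] : exists x2, x = (2 * x2)%N.
  by exists x./2; rewrite -{1}(odd_double_half x) (negbTE x_even) add0n -mul2n.
have y_odd : odd y.
  apply: contraT => y_even; have := (gcd3_eq1P x y z).1 gxyz 2.
  by rewrite !dvdz2_nat x_even y_even z_even => /(_ isT isT isT).
have y_gt0 : (0 < y)%N by rewrite lt0n; apply: contraTneq y_odd => ->.
have [u [v [Ey Ez cop]]] := coprime_cofactors z y_gt0.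
set g := gcdn y z in Ey Ez.
have g_gt0 : (0 < g)%N by rewrite gcdn_gt0 y_gt0.
have g_odd : odd g by move: y_odd; rewrite Ey oddM => /andP[].
have v_even : (2 %| v%:Z)%Z by rewrite dvdz2_nat; move: z_even; rewrite Ez oddM g_odd.
have det_gt0 : 0 < u%:Z * 0 - v%:Z * (- x2%:Z).
  rewrite mulr0 sub0r mulrN opprK -PoszM ltz_nat.
  by move: x_gt0 z_gt0; rewrite Ex Ez !muln_gt0 => /andP[_ ->] /andP[_ ->].
have [y1 [z1 [gam gamG [Egam y1_lt_z1 Ez1 dvd_bd]]]] :=
  Gamma0_2_hermite g (cop : coprimez u v) v_even det_gt0.
rewrite -!PoszM -Ey -Ez in Egam.
have gcd1 : gcd3 g y1 z1 = 1%N.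
  apply/gcd3_eq1P => e eg ey1 ez1; have /andP[ex2 _] := dvd_bd e eg ey1 ez1.
  refine ((gcd3_eq1P x y z).1 gxyz e _ _ _).
  - by rewrite Ex PoszM dvdz_mull // -(rpredN _ x2%:Z).
  - by rewrite Ey PoszM dvdz_mulr.
  - by rewrite Ez PoszM dvdz_mulr.
exists (ut g y1 z1).
  exists g, y1, z1; split=> //; repeat split => //.
  - exact: leq_ltn_trans y1_lt_z1.
  - have : (g * z1)%:Z = (x2 * z)%:Z by rewrite PoszM Ez1 Ez !PoszM; ring.
    by move: xz_m; rewrite Ex; lia.
exists (intmx gam); first exact: G2p_gamma.
rewrite !ut_intmx -intmxM -Egam; apply: scale_intmx_mul_w2.
by rewrite /W2 mul_mat2 scale_mat2 Ex PoszM; congr mat2; ring.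
Qed.

Section M1_cosets.
Variables (R : realType) (m x y z z' t : nat).
Hypothesis hM1 : condM1 m x y z.
Let g := gcdn z (2 * y).
Hypotheses (Ez : z = (g * z')%N) (E2y : (2 * y)%N = (g * t)%N) (cop : coprime z' t).

Let g_gt0 : (0 < g)%N.
Proof. by case: hM1 => _ [z_gt0 _]; rewrite gcdn_gt0 z_gt0. Qed.

Let z'_gt0 : (0 < z')%N.
Proof. by case: hM1 => _ [z_gt0 _]; move: z_gt0; rewrite Ez muln_gt0 => /andP[]. Qed.

Let cop_xg : coprime x g.
Proof. by case: hM1 => _ [_ [_ [_ [gxyz x_odd]]]]; rewrite coprime_gcd_double ?x_odd. Qed.

Lemma M1_coset_S1w2 : ~~ odd t ->
  exists2 gam, inS1 m gam &
    exists2 h, Gamma0_2plus h & (ut x y z : 'M[R]_2) = h *m gam *m w2.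
Proof.
move=> t_even; case: hM1 => x_gt0 [_ [xz_m [_ [_ x_odd]]]].
have cop' : coprimez (- z'%:Z) t by rewrite coprimeNz coprimezE.
have t_even' : (2 %| t%:Z)%Z by rewrite dvdz2_nat.
have z'_odd : odd z' by rewrite -coprimen2 (coprime_dvdr _ cop) // dvdn2.
have det_gt0 : 0 < (- z'%:Z) * (- x%:Z) - t%:Z * 0.
  by rewrite mulr0 subr0 mulrNN -PoszM ltz_nat muln_gt0 z'_gt0 x_gt0.
have [y1 [z1 [gam gamG [Egam y1_lt_z1 Ez1 dvd_bd]]]] :=
  Gamma0_2_hermite g cop' t_even' det_gt0.
rewrite mulrN -!PoszM -Ez -E2y in Egam.
move: Ez1; rewrite mulr0 subr0 mulrNN -PoszM => -[Ez1].
have gcd1 : gcd3 g y1 z1 = 1%N.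
  apply/gcd3_eq1P => e eg ey1 ez1; have /andP[_ ex] := dvd_bd e eg ey1 ez1.
  by apply: coprime_dvdz1 cop_xg _ eg; rewrite -rpredN.
exists (ut g y1 z1).
  exists g, y1, z1; split=> //; repeat split => //.
  - exact: leq_ltn_trans y1_lt_z1.
  - by rewrite Ez1 mulnA -Ez mulnC.
  - by rewrite Ez1 oddM z'_odd x_odd.
exists (w2 *m intmx gam); first by apply: G2p_mul; [exact: G2p_w2 | exact: G2p_gamma].
rewrite !ut_intmx -(mulmxA w2) -intmxM -Egam; symmetry; apply: w2_conj.
by rewrite /W2 !mul_mat2 scale_mat2; congr mat2; ring.
Qed.

Lemma M1_coset_S2w2 : odd t ->
  exists2 gam, inS2 m gam &
    exists2 h, Gamma0_2plus h & (ut x y z : 'M[R]_2) = h *m gam *m w2.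
Proof.
move=> t_odd; case: hM1 => x_gt0 [_ [xz_m _]].
have cop' : coprimez (- t%:Z) (- (2 * z')%N%:Z).
  by rewrite coprimeNz coprimezN coprimezE coprime_sym coprimeMl coprime2n t_odd.
have v_even : (2 %| - (2 * z')%N%:Z)%Z by rewrite rpredN dvdz2_nat oddM.
have det_gt0 : 0 < (- t%:Z) * 0 - (- (2 * z')%N%:Z) * x%:Z.
  by rewrite mulr0 sub0r mulNr opprK -PoszM ltz_nat !muln_gt0 z'_gt0 x_gt0.
have [y1 [z1 [gam gamG [Egam y1_lt_z1 Ez1 dvd_bd]]]] :=
  Gamma0_2_hermite g cop' v_even det_gt0.
rewrite !mulrN -!PoszM mulnCA -Ez -E2y in Egam.
move: Ez1; rewrite mulr0 sub0r mulNr opprK -PoszM => -[Ez1].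
have g_even : ~~ odd g by move/(congr1 odd): E2y; rewrite !oddM t_odd andbT => <-.
have gcd1 : gcd3 g y1 z1 = 1%N.
  apply/gcd3_eq1P => e eg ey1 ez1; have /andP[ex _] := dvd_bd e eg ey1 ez1.
  exact: coprime_dvdz1 cop_xg ex eg.
exists ((Num.sqrt 2)^-1 *: ut g y1 z1).
  exists g, y1, z1; split=> //; repeat split => //.
  - exact: leq_ltn_trans y1_lt_z1.
  - by rewrite Ez1 -xz_m Ez; ring.
  - by rewrite Ez1 !oddM.
exists (intmx gam); first exact: G2p_gamma.
rewrite !ut_intmx -[intmx gam *m _]scalemxAr -intmxM -Egam; symmetry.
apply: scale_intmx_mul_w2.
by rewrite /W2 !mul_mat2 scale_mat2; congr mat2; ring.
Qed.

End M1_cosets.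

Lemma M1_coset_M2w2 (R : realType) m x y z : condM1 m x y z ->
  exists2 gam, inM2 m gam &
    exists2 h, Gamma0_2plus h & (ut x y z : 'M[R]_2) = h *m gam *m w2.
Proof.
move=> hM1; have [_ [z_gt0 _]] := hM1.
have [z' [t [Ez E2y cop]]] := coprime_cofactors (2 * y) z_gt0.
case: (boolP (odd t)) => [t_odd | t_even].
- by have [gam ? ?] := M1_coset_S2w2 R hM1 Ez E2y cop t_odd; exists gam; first right.
- by have [gam ? ?] := M1_coset_S1w2 R hM1 Ez E2y cop t_even; exists gam; first left.
Qed.

Unset Implicit Arguments.

Theorem lemma2p7 (R : realType) (m : nat) :
  (0 < m)%N -> ~~ odd m ->
  forall g : 'M[R]_2,
    (exists2 gam, inM1 m gam & exists2 h, Gamma0_2plus h & g = h *m gam)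
    <->
    (exists2 gam, inM2 m gam & exists2 h, Gamma0_2plus h & g = h *m gam *m w2).
Proof.
move=> _ _ g; split.
- case=> _ [x [y [z [hM1 ->]]]] [h hG ->].
  have [gam' hgam' [h' hh' ->]] := M1_coset_M2w2 R hM1.
  by exists gam' => //; exists (h *m h'); rewrite ?mulmxA //; apply: G2p_mul.
- case=> _ [[x [y [z [hS ->]]]] | [x [y [z [hS ->]]]]] [h hG ->].
  + have [gam hgam [h' hh' E]] := S1w2_coset_M1 R hS.
    by exists gam => //; exists (h *m h'); [apply: G2p_mul | rewrite -mulmxA E mulmxA].
  + have [gam hgam [h' hh' E]] := S2w2_coset_M1 R hS.
    by exists gam => //; exists (h *m h'); [apply: G2p_mul | rewrite -mulmxA E mulmxA].
Qed.
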